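(* Let $(X,d)$ be a metric space with a distinguished point $o$, $p>0$, $\mathcal{F}$ a $p$-admissible sheaf of metrics on $X$, and $\rho_+:\mathbf{R}_+\to\mathbf{R}_+$ an increasing unbounded function. Let $\mathcal{A}$ be the set of finite subsets of $X$ containing $o$. Assume there is a function $T:\mathbf{R}_+\to\mathbf{R}_+$ such that for every $U\in\mathcal{A}$ and every $K>0$ there exists $\sigma\in\mathcal{F}(U)$ with $\sigma(x,y)\le\rho_+(d(x,y))$ for all $x,y\in U$ and $\sigma(x,y)\ge K$ for all $(x,y)\in\Delta_{T(K)}(U)$. Then $\mathcal{F}(X)$ contains a coarse metric.
   Context: A (pseudo-)metric on a set $\Omega$ is a function $\sigma:\Omega^2\to\mathbf{R}_+$ with $\sigma(x,y)=\sigma(y,x)$, $\sigma(x,y)\le\sigma(x,z)+\sigma(z,y)$, $\sigma(x,x)=0$. A sheaf of metrics $\mathcal{F}$ on a set $X$ assigns to each $\Omega\subseteq X$ a set $\mathcal{F}(\Omega)$ of metrics on $\Omega$, such that the restriction of any element of $\mathcal{F}(\Omega)$ to $\Omega'\subseteq\Omega$ belongs to $\mathcal{F}(\Omega')$. For $p>0$, $\mathcal{F}$ is $p$-admissible if for every $\Omega\subseteq X$: (i) $\{\sigma^p:\sigma\in\mathcal{F}(\Omega)\}$ is a convex cone of functions on $\Omega^2$ (for $\sigma_1,\sigma_2\in\mathcal{F}(\Omega)$ and $s,t\ge0$ there is $\sigma\in\mathcal{F}(\Omega)$ with $\sigma^p=s\sigma_1^p+t\sigma_2^p$); (ii) $\mathcal{F}(\Omega)$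 is closed under pointwise convergence; (iii) for every family $(U_i)$ of finite subsets of $\Omega$ with union $\Omega$, directed under inclusion, and every family $\sigma_i\in\mathcal{F}(U_i)$ with $\sigma_i=\sigma_j$ on $U_i\cap U_j$, there is $\sigma\in\mathcal{F}(\Omega)$ restricting to $\sigma_i$ on each $U_i$. A metric $\sigma$ on $X$ is coarse if there exist increasing unbounded $\rho_-,\rho_+':\mathbf{R}_+\to\mathbf{R}_+$ with $\rho_-(d(x,y))\le\sigma(x,y)\le\rho_+'(d(x,y))$ for all $x,y$. $\Delta_r(U)=\{(x,y)\in U^2:d(x,y)\ge r\}$. *)

From Stdlib Require Export Reals List.
Open Scope R_scope.

(* Subsets of X are predicates X -> Prop.  A metric on a subset Om is
   encoded as a total function X -> X -> R of which only the values on
   Om x Om matter (see the extensionality axiom of sheaves below). *)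

Definition subset {X : Type} (A B : X -> Prop) : Prop := forall x, A x -> B x.

Definition finite_set {X : Type} (U : X -> Prop) : Prop :=
  exists l : list X, forall x, U x -> In x l.

Definition is_metric {X : Type} (d : X -> X -> R) : Prop :=
  (forall x y, 0 <= d x y) /\
  (forall x y, d x y = d y x) /\
  (forall x y z, d x y <= d x z + d z y) /\
  (forall x y, d x y = 0 <-> x = y).

Definition is_pmetric_on {X : Type} (Om : X -> Prop) (s : X -> X -> R) : Prop :=
  (forall x y, Om x -> Om y -> 0 <= s x y) /\
  (forall x y, Om x -> Om y -> s x y = s y x) /\
  (forall x y z, Om x -> Om y -> Om z -> s x y <= s x z + s z y) /\
  (forall x, Om x -> s x x = 0).

(* x^p for x >= 0 and p > 0, with the convention 0^p = 0 *)
Definition rpow (x p : R) : R := if Rle_dec x 0 then 0 else Rpower x p.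

(* A sheaf of metrics on X: F Om s means "s (restricted to Om^2) belongs to F(Om)". *)
Definition sheaf_of_metrics {X : Type} (F : (X -> Prop) -> (X -> X -> R) -> Prop) : Prop :=
  (* encoding: membership depends only on the values on Om x Om *)
  (forall Om s s', F Om s -> (forall x y, Om x -> Om y -> s x y = s' x y) -> F Om s') /\
  (forall Om s, F Om s -> is_pmetric_on Om s) /\
  (forall Om Om' s, subset Om' Om -> F Om s -> F Om' s).

Definition p_admissible {X : Type} (p : R) (F : (X -> Prop) -> (X -> X -> R) -> Prop) : Prop :=
  (forall Om s1 s2 a b, F Om s1 -> F Om s2 -> 0 <= a -> 0 <= b ->
     exists s, F Om s /\
       forall x y, Om x -> Om y ->
         rpow (s x y) p = a * rpow (s1 x y) p + b * rpow (s2 x y) p) /\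
  (forall Om (sn : nat -> X -> X -> R) s,
     (forall n, F Om (sn n)) ->
     (forall x y, Om x -> Om y -> Un_cv (fun n => sn n x y) (s x y)) ->
     F Om s) /\
  (forall Om (I : Type) (U : I -> X -> Prop) (si : I -> X -> X -> R),
     inhabited I ->
     (forall i, finite_set (U i)) ->
     (forall i, subset (U i) Om) ->
     (forall x, Om x -> exists i, U i x) ->
     (forall i j, exists k, subset (U i) (U k) /\ subset (U j) (U k)) ->
     (forall i, F (U i) (si i)) ->
     (forall i j x y, U i x -> U j x -> U i y -> U j y -> si i x y = si j x y) ->
     exists s, F Om s /\ forall i x y, U i x -> U i y -> s x y = si i x y).

Definition incr_unbounded (f : R -> R) : Prop :=
  (forall t, 0 <= t -> 0 <= f t) /\
  (forall s t, 0 <= s -> s <= t -> f s <= f t) /\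
  (forall M, exists t, 0 <= t /\ M <= f t).

Definition coarse {X : Type} (d s : X -> X -> R) : Prop :=
  exists rm rp : R -> R, incr_unbounded rm /\ incr_unbounded rp /\
    forall x y, rm (d x y) <= s x y /\ s x y <= rp (d x y).

(* Write K_n for a level so large that weight n * K_n^p >= n^p,
   with weights weight n = 2^-(n+1) summing to less than 1.
   1. On a finite set U containing o, the hypothesis provides metrics
      sigma_n in F(U) bounded by rho_+ o d and >= K_n on Delta_{T(K_n)}(U).
      Since p-th powers of elements of F(U) form a convex cone, the metric
      s with s^p = sum_{n<=N} weight n * sigma_n^p lies in F(U); it is still
      bounded by rho_+ o d, and s >= n on Delta_{T(K_n)}(U) for all n <= N.
   2. Index these "stage metrics" by pairs (finite list, N), ordered by
      inclusion and size.  A bounded net of metrics in a p-admissible sheaf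
      has a limit point in F(Omega) (compactness): take the ultralimit v
      along an ultrafilter refining the tails of the net; on each finite
      stage v is a pointwise limit of members of the net, hence lies in
      F(stage), and gluing along the stages puts v in F(X).
   3. The limit inherits every eventual bound: v <= rho_+ o d, and v >= n
      whenever d >= T(K_n).  The latter yields an increasing unbounded
      lower control function, so v is coarse. *)

From Stdlib Require Import Reals List Lra Lia Classical ClassicalEpsilon.
From mathcomp Require classical_sets filter.
Open Scope R_scope.

Lemma nat_above (M : R) : exists n : nat, M <= INR n.
Proof.
  destruct (INR_archimed 1 M) as [n hn]; [lra|].
  exists n. rewrite Rmult_1_r in hn. lra.
Qed.

Section Ultralimits.

Context {Idx : Type} {Uf : (Idx -> Prop) -> Prop}.
Hypothesis Uf_ultra : filter.UltraFilter Uf.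

Lemma uf_mono (Q Q' : Idx -> Prop) : Uf Q -> (forall j, Q j -> Q' j) -> Uf Q'.
Proof. intros hQ hQQ'. exact (filter.filterS hQQ' hQ). Qed.

Lemma uf_and (Q Q' : Idx -> Prop) : Uf Q -> Uf Q' -> Uf (fun j => Q j /\ Q' j).
Proof. exact (@filter.filterI _ _ _ Q Q'). Qed.

Lemma uf_witness (Q : Idx -> Prop) : Uf Q -> exists j, Q j.
Proof. exact (@filter.filter_ex _ _ _ Q). Qed.

Lemma uf_forall_list {A : Type} (L : list A) (P : A -> Idx -> Prop) :
  (forall a, In a L -> Uf (P a)) -> Uf (fun j => forall a, In a L -> P a j).
Proof.
  induction L as [|a L IH]; intro hL.
  - apply (uf_mono _ _ filter.filterT). intros j _ b [].
  - apply (uf_mono _ _ (uf_and _ _ (hL a (or_introl eq_refl))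
                                   (IH (fun b hb => hL b (or_intror hb))))).
    intros j [ha hL'] b [<-|hb]; auto.
Qed.

Definition ultralimit (f : Idx -> R) (v : R) : Prop :=
  forall eps, 0 < eps -> Uf (fun j => Rabs (f j - v) < eps).

(* an almost surely bounded family has an ultralimit: the supremum of its
   almost sure lower bounds *)
Lemma ultralimit_exists (f : Idx -> R) (m M : R) :
  Uf (fun j => m <= f j <= M) -> exists v, ultralimit f v.
Proof.
  intro hf.
  set (S := fun r => Uf (fun j => r <= f j)).
  assert (S_bounded : bound S).
  { exists M. intros r hr. destruct (uf_witness _ (uf_and _ _ hr hf)) as [j hj]. lra. }
  assert (S_inhabited : exists r, S r).
  { exists m. apply (uf_mono _ _ hf). intros j hj; apply hj. }
  destruct (completeness S S_bounded S_inhabited) as [v [v_upper v_least]].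
  exists v. intros eps heps.
  assert (above : Uf (fun j => v - eps < f j)).
  { destruct (@filter.in_ultra_setVsetC _ _ (fun j => v - eps < f j) Uf_ultra) as [h|h];
      [exact h|].
    enough (v <= v - eps) by lra.
    apply v_least. intros r hr.
    destruct (uf_witness _ (uf_and _ _ hr h)) as [j [h1 h2]]. simpl in h2. lra. }
  assert (below : Uf (fun j => f j < v + eps)).
  { destruct (@filter.in_ultra_setVsetC _ _ (fun j => f j < v + eps) Uf_ultra) as [h|h];
      [exact h|].
    enough (v + eps <= v) by lra.
    apply v_upper. apply (uf_mono _ _ h). intros j hj. simpl in hj. lra. }
  apply (uf_mono _ _ (uf_and _ _ above below)). intros j [h1 h2]. apply Rabs_def1; lra.
Qed.

Lemma ultralimit_ge (f : Idx -> R) (v c : R) :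
  ultralimit f v -> Uf (fun j => c <= f j) -> c <= v.
Proof.
  intros hv hc. destruct (Rle_or_lt c v) as [h|h]; [exact h|].
  destruct (uf_witness _ (uf_and _ _ (hv (c - v) ltac:(lra)) hc)) as [j [h1 h2]].
  apply Rabs_def2 in h1. lra.
Qed.

Lemma ultralimit_le (f : Idx -> R) (v c : R) :
  ultralimit f v -> Uf (fun j => f j <= c) -> v <= c.
Proof.
  intros hv hc. destruct (Rle_or_lt v c) as [h|h]; [exact h|].
  destruct (uf_witness _ (uf_and _ _ (hv (v - c) ltac:(lra)) hc)) as [j [h1 h2]].
  apply Rabs_def2 in h1. lra.
Qed.

End Ultralimits.

Definition eventually {Idx : Type} (below : Idx -> Idx -> Prop) (P : Idx -> Prop) : Prop :=
  exists i, forall j, below i j -> P j.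

Lemma ultrafilter_refining_tails {Idx : Type} (below : Idx -> Idx -> Prop) (i0 : Idx) :
  (forall i, below i i) ->
  (forall i j k, below i j -> below j k -> below i k) ->
  (forall i j, exists k, below i k /\ below j k) ->
  exists Uf, filter.UltraFilter Uf /\
    forall P, eventually below P -> Uf P.
Proof.
  intros refl trans dir.
  assert (tails : filter.ProperFilter (filter.filter_from classical_sets.setT below)).
  { apply filter.filter_from_proper.
    - apply filter.filter_fromT_filter; [exists i0; exact I|].
      intros i j. destruct (dir i j) as [k [hik hjk]].
      exists k. intros l hkl. split; eauto.
    - intros i _. exists i. apply refl. }
  destruct (filter.ultraFilterLemma tails) as [Uf [Uf_ultra tails_in_Uf]].
  exists Uf. split; [exact Uf_ultra|].
  intros P [i hi]. apply tails_in_Uf. exists i; [exact I|exact hi].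
Qed.

Lemma rpow_nonneg (x p : R) : 0 <= rpow x p.
Proof. unfold rpow. destruct Rle_dec; [lra|unfold Rpower; left; apply exp_pos]. Qed.

Lemma rpow_lt (p x y : R) : 0 < p -> 0 <= x -> x < y -> rpow x p < rpow y p.
Proof.
  intros hp hx hxy. unfold rpow.
  destruct (Rle_dec y 0) as [hy|hy]; [lra|].
  destruct Rle_dec as [hx0|hx0]; unfold Rpower; [apply exp_pos|].
  apply exp_increasing, Rmult_lt_compat_l; [exact hp|].
  apply ln_increasing; lra.
Qed.

Lemma rpow_le (p x y : R) : 0 < p -> 0 <= x -> x <= y -> rpow x p <= rpow y p.
Proof.
  intros hp hx [hxy|<-]; [left; apply rpow_lt; assumption|lra].
Qed.

Lemma rpow_le_inv (p x y : R) : 0 < p -> 0 <= y -> rpow x p <= rpow y p -> x <= y.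
Proof.
  intros hp hy h. destruct (Rle_or_lt x y) as [h'|h']; [exact h'|].
  pose proof (rpow_lt p y x hp hy h'). lra.
Qed.

Definition weight (n : nat) : R := (1/2)^(S n).

Definition level (p : R) (n : nat) : R := Rpower (rpow (INR n) p / weight n + 1) (1/p).

Lemma weight_pos (n : nat) : 0 < weight n.
Proof. unfold weight. apply pow_lt. lra. Qed.

Lemma level_pos (p : R) (n : nat) : 0 < level p n.
Proof. unfold level, Rpower. apply exp_pos. Qed.

Lemma level_spec (p : R) (n : nat) : 0 < p -> rpow (INR n) p <= weight n * rpow (level p n) p.
Proof.
  intro hp. pose proof (weight_pos n) as hw. pose proof (rpow_nonneg (INR n) p) as hn.
  assert (hq : 0 <= rpow (INR n) p / weight n) by (apply Rle_mult_inv_pos; lra).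
  unfold rpow at 2. destruct Rle_dec as [h|_]; [pose proof (level_pos p n); lra|].
  unfold level. rewrite Rpower_mult.
  replace (1 / p * p) with 1 by (field; lra).
  rewrite Rpower_1 by lra.
  replace (weight n * (rpow (INR n) p / weight n + 1)) with (rpow (INR n) p + weight n)
    by (field; lra).
  lra.
Qed.

Lemma cone_accumulation {X : Type} (p : R) (F : (X -> Prop) -> (X -> X -> R) -> Prop)
  (Om : X -> Prop) (b : X -> X -> R) (sigma : nat -> X -> X -> R)
  (A : nat -> X -> X -> Prop) :
  0 < p -> sheaf_of_metrics F -> p_admissible p F ->
  (forall n, F Om (sigma n)) ->
  (forall n x y, Om x -> Om y -> sigma n x y <= b x y) ->
  (forall n x y, Om x -> Om y -> A n x y -> level p n <= sigma n x y) ->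
  forall N, exists s, F Om s /\ forall x y, Om x -> Om y ->
    rpow (s x y) p <= (1 - (1/2)^(S N)) * rpow (b x y) p /\
    (forall n, (n <= N)%nat -> A n x y -> rpow (INR n) p <= rpow (s x y) p).
Proof.
  intros hp [_ [F_metric _]] [F_cone _] F_sigma sigma_le sigma_ge.
  assert (upper : forall n x y, Om x -> Om y -> rpow (sigma n x y) p <= rpow (b x y) p).
  { intros n x y hx hy. apply rpow_le; auto.
    exact (proj1 (F_metric _ _ (F_sigma n)) x y hx hy). }
  assert (lower : forall n x y, Om x -> Om y -> A n x y ->
                    rpow (INR n) p <= weight n * rpow (sigma n x y) p).
  { intros n x y hx hy hA. eapply Rle_trans; [apply level_spec, hp|].
    apply Rmult_le_compat_l; [left; apply weight_pos|].
    apply rpow_le; auto. left; apply level_pos. }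
  induction N as [|N [s [F_s hs]]].
  - destruct (F_cone Om (sigma 0%nat) (sigma 0%nat) (weight 0) 0 (F_sigma 0%nat) (F_sigma 0%nat))
      as [s [F_s hs]]; [left; apply weight_pos|lra|].
    exists s. split; [exact F_s|]. intros x y hx hy. rewrite hs by auto. split.
    + specialize (upper 0%nat x y hx hy). unfold weight. simpl. lra.
    + intros n hn hA. assert (n = 0%nat) as -> by lia.
      specialize (lower 0%nat x y hx hy hA). lra.
  - destruct (F_cone Om s (sigma (S N)) 1 (weight (S N)) F_s (F_sigma (S N)))
      as [s' [F_s' hs']]; [lra|left; apply weight_pos|].
    exists s'. split; [exact F_s'|]. intros x y hx hy. rewrite hs' by auto.
    destruct (hs x y hx hy) as [s_upper s_lower].
    pose proof (rpow_nonneg (s x y) p). pose proof (rpow_nonneg (sigma (S N) x y) p).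
    pose proof (weight_pos (S N)). split.
    + assert (slack : 0 <= weight (S N) * (rpow (b x y) p - rpow (sigma (S N) x y) p)).
      { apply Rmult_le_pos; [lra|]. specialize (upper (S N) x y hx hy). lra. }
      unfold weight in *. simpl in *. lra.
    + intros n hn hA. destruct (Nat.eq_dec n (S N)) as [->|hne].
      * specialize (lower (S N) x y hx hy hA). lra.
      * assert (0 <= weight (S N) * rpow (sigma (S N) x y) p) by (apply Rmult_le_pos; lra).
        specialize (s_lower n ltac:(lia) hA). lra.
Qed.

Lemma finite_stage_metric {X : Type} (d : X -> X -> R) (p : R)
  (F : (X -> Prop) -> (X -> X -> R) -> Prop) (T : R -> R) (U : X -> Prop) (b : X -> X -> R) :
  0 < p -> sheaf_of_metrics F -> p_admissible p F ->
  (forall x y, 0 <= b x y) ->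
  (forall K, 0 < K -> exists s, F U s /\
     (forall x y, U x -> U y -> s x y <= b x y) /\
     (forall x y, U x -> U y -> T K <= d x y -> K <= s x y)) ->
  forall N, exists s, F U s /\
    (forall x y, U x -> U y -> s x y <= b x y) /\
    (forall n x y, (n <= N)%nat -> U x -> U y -> T (level p n) <= d x y -> INR n <= s x y).
Proof.
  intros hp F_sheaf F_adm b_nonneg hyp N.
  destruct (choice (fun n sigma => F U sigma /\
              (forall x y, U x -> U y -> sigma x y <= b x y) /\
              (forall x y, U x -> U y -> T (level p n) <= d x y -> level p n <= sigma x y)))
    as [sigma h_sigma].
  { intro n. apply hyp, level_pos. }
  destruct (cone_accumulation p F U b sigma (fun n x y => T (level p n) <= d x y)
              hp F_sheaf F_adm (fun n => proj1 (h_sigma n))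
              (fun n => proj1 (proj2 (h_sigma n))) (fun n => proj2 (proj2 (h_sigma n))) N)
    as [s [F_s hs]].
  exists s. split; [exact F_s|]. split.
  - intros x y hx hy. apply (rpow_le_inv p); auto.
    destruct (hs x y hx hy) as [h _]. pose proof (rpow_nonneg (b x y) p).
    assert (0 <= (1/2)^(S N) * rpow (b x y) p) by (apply Rmult_le_pos; [apply pow_le|]; lra).
    lra.
  - intros n x y hn hx hy hd. apply (rpow_le_inv p); auto.
    + exact (proj1 (proj1 (proj2 F_sheaf) _ _ F_s) x y hx hy).
    + exact (proj2 (hs x y hx hy) n hn hd).
Qed.

Section BoundedNets.

Context {X : Type} (p : R) (F : (X -> Prop) -> (X -> X -> R) -> Prop).
Hypothesis F_sheaf : sheaf_of_metrics F.
Hypothesis F_adm : p_admissible p F.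

Context {Idx : Type} (below : Idx -> Idx -> Prop) (i0 : Idx).
Hypothesis below_refl : forall i, below i i.
Hypothesis below_trans : forall i j k, below i j -> below j k -> below i k.
Hypothesis below_directed : forall i j, exists k, below i k /\ below j k.

Context (Om : X -> Prop) (U : Idx -> X -> Prop).
Hypothesis U_finite : forall i, finite_set (U i).
Hypothesis U_sub : forall i, subset (U i) Om.
Hypothesis U_mono : forall i j, below i j -> subset (U i) (U j).
Hypothesis U_cover : forall x, Om x -> exists i, U i x.

Context (s : Idx -> X -> X -> R) (b : X -> X -> R).
Hypothesis s_in_F : forall i, F (U i) (s i).
Hypothesis s_bounded : forall i x y, U i x -> U i y -> s i x y <= b x y.

Lemma eventually_in_stages (x y : X) : Om x -> Om y -> eventually below (fun i => U i x /\ U i y).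
Proof.
  intros hx hy. destruct (U_cover x hx) as [ix hix]. destruct (U_cover y hy) as [iy hiy].
  destruct (below_directed ix iy) as [k [hk1 hk2]].
  exists k. intros j hkj. split; [apply (U_mono ix)|apply (U_mono iy)]; eauto.
Qed.

Lemma glue_along_stages (v : X -> X -> R) : (forall i, F (U i) v) -> F Om v.
Proof.
  intro hv. destruct F_adm as [_ [_ F_glue]]. destruct F_sheaf as [F_ext _].
  destruct (F_glue Om Idx U (fun _ => v) (inhabits i0) U_finite U_sub U_cover)
    as [w [F_w w_agrees]]; [|exact hv|reflexivity|].
  - intros i j. destruct (below_directed i j) as [k [hik hjk]].
    exists k. split; apply U_mono; assumption.
  - apply (F_ext Om w v F_w). intros x y hx hy.
    destruct (eventually_in_stages x y hx hy) as [i hi].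
    destruct (hi i (below_refl i)) as [hix hiy]. exact (w_agrees i x y hix hiy).
Qed.

Section UltraLimit.

Context (Uf : (Idx -> Prop) -> Prop).
Hypothesis Uf_ultra : filter.UltraFilter Uf.
Hypothesis Uf_tails : forall P, eventually below P -> Uf P.

Context (v : X -> X -> R).
Hypothesis v_limit : forall x y, Om x -> Om y -> ultralimit (Uf := Uf) (fun i => s i x y) (v x y).

Lemma stage_approximation (i : Idx) (eps : R) : 0 < eps ->
  exists j, below i j /\ forall x y, U i x -> U i y -> Rabs (s j x y - v x y) < eps.
Proof.
  intro heps. destruct (U_finite i) as [L hL].
  set (close_at := fun x y j => U i x -> U i y -> Rabs (s j x y - v x y) < eps).
  assert (pointwise : forall x y, Uf (close_at x y)).
  { intros x y. destruct (classic (U i x /\ U i y)) as [[hx hy]|h].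
    - apply (uf_mono Uf_ultra _ _ (v_limit x y (U_sub i x hx) (U_sub i y hy) eps heps)).
      intros j hj _ _. exact hj.
    - apply (uf_mono Uf_ultra _ _ filter.filterT). intros j _ hx hy. tauto. }
  assert (close : Uf (fun j => forall x, In x L -> forall y, In y L -> close_at x y j)).
  { apply (uf_forall_list Uf_ultra L). intros x _.
    apply (uf_forall_list Uf_ultra L (close_at x)). intros y _. apply pointwise. }
  assert (later : Uf (below i)) by (apply Uf_tails; exists i; auto).
  destruct (uf_witness Uf_ultra _ (uf_and Uf_ultra _ _ close later)) as [j [hj hij]].
  exists j. split; [exact hij|]. intros x y hx hy. apply hj; auto.
Qed.

(* hence v is a pointwise limit of members of F(U_i) *)
Lemma limit_in_stage (i : Idx) : F (U i) v.
Proof.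
  destruct F_sheaf as [_ [_ F_restrict]]. destruct F_adm as [_ [F_limit _]].
  destruct (choice (fun (m : nat) j => below i j /\ forall x y, U i x -> U i y ->
                      Rabs (s j x y - v x y) < / INR (S m))) as [jm h_jm].
  { intro m. apply stage_approximation, Rinv_0_lt_compat, lt_0_INR. lia. }
  apply (F_limit (U i) (fun m => s (jm m)) v).
  - intro m. apply (F_restrict (U (jm m))); [apply U_mono, h_jm|apply s_in_F].
  - intros x y hx hy eps heps.
    destruct (archimed_cor1 eps heps) as [N [hN hN0]]. exists N. intros m hm.
    unfold R_dist. eapply Rlt_trans; [apply (proj2 (h_jm m) x y hx hy)|].
    eapply Rle_lt_trans; [|exact hN].
    apply Rinv_le_contravar; [apply lt_0_INR; exact hN0|apply le_INR; lia].
Qed.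

End UltraLimit.

Theorem bounded_net_limit : exists v, F Om v /\
  forall x y c, Om x -> Om y ->
    (eventually below (fun i => c <= s i x y) -> c <= v x y) /\
    (eventually below (fun i => s i x y <= c) -> v x y <= c).
Proof.
  destruct (ultrafilter_refining_tails below i0 below_refl below_trans below_directed)
    as [Uf [Uf_ultra Uf_tails]].
  assert (limits : forall x y, exists w,
             Om x -> Om y -> ultralimit (Uf := Uf) (fun i => s i x y) w).
  { intros x y. destruct (classic (Om x /\ Om y)) as [[hx hy]|h]; [|exists 0; tauto].
    destruct (ultralimit_exists Uf_ultra (fun i => s i x y) 0 (b x y)) as [w hw];
      [|exists w; auto].
    apply Uf_tails. destruct (eventually_in_stages x y hx hy) as [i hi].
    exists i. intros j hij. destruct (hi j hij) as [hjx hjy]. split.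
    - exact (proj1 (proj1 (proj2 F_sheaf) _ _ (s_in_F j)) x y hjx hjy).
    - apply s_bounded; assumption. }
  destruct (choice (fun x vx => forall y,
              Om x -> Om y -> ultralimit (Uf := Uf) (fun i => s i x y) (vx y)))
    as [v v_limit]; [intro x; exact (choice _ (limits x))|].
  exists v. split.
  - apply glue_along_stages. intro i. exact (limit_in_stage Uf Uf_ultra Uf_tails v v_limit i).
  - intros x y c hx hy. split; intro h.
    + exact (ultralimit_ge Uf_ultra _ _ _ (v_limit x y hx hy) (Uf_tails _ h)).
    + exact (ultralimit_le Uf_ultra _ _ _ (v_limit x y hx hy) (Uf_tails _ h)).
Qed.

End BoundedNets.

(* Step 3: thresholds tau_n give an increasing unbounded control function
   rm with rm(t) <= s whenever s >= 0 and s >= n for every n with tau_n <= t;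
   rm(t) is the supremum of the n <= t with tau_n <= t. *)
Lemma threshold_lower_control (tau : nat -> R) :
  exists rm : R -> R, incr_unbounded rm /\
    forall t s, 0 <= s -> (forall n, tau n <= t -> INR n <= s) -> rm t <= s.
Proof.
  set (term := fun (n : nat) (t : R) => if Rle_dec (Rmax (tau n) (INR n)) t then INR n else 0).
  assert (term_nonneg : forall n t, 0 <= term n t).
  { intros n t. unfold term. destruct Rle_dec; [apply pos_INR|lra]. }
  assert (term_mono : forall n t t', t <= t' -> term n t <= term n t').
  { intros n t t' h. unfold term.
    destruct (Rle_dec _ t), (Rle_dec _ t'); try lra; apply pos_INR. }
  assert (sup : forall t, exists m, is_lub (fun r => exists n, r = term n t) m).
  { intro t. destruct (completeness (fun r => exists n, r = term n t)) as [m hm].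
    - exists (Rmax 0 t). intros r [n ->]. unfold term.
      destruct Rle_dec as [h|_]; [|apply Rmax_l].
      pose proof (Rmax_r (tau n) (INR n)). pose proof (Rmax_r 0 t). lra.
    - exists (term 0%nat t), 0%nat. reflexivity.
    - exists m. exact hm. }
  destruct (choice _ sup) as [rm h_rm].
  assert (term_le : forall n t, term n t <= rm t) by (intros n t; apply (proj1 (h_rm t)); eauto).
  exists rm. split; [split; [|split]|].
  - intros t _. apply Rle_trans with (term 0%nat t); auto.
  - intros t t' _ h. apply (proj2 (h_rm t)). intros r [n ->].
    apply Rle_trans with (term n t'); auto.
  - intro M. destruct (nat_above M) as [n hn].
    set (t := Rmax (tau n) (INR n)).
    pose proof (Rmax_r (tau n) (INR n)). pose proof (pos_INR n).
    exists t. split; [unfold t; lra|].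
    apply Rle_trans with (term n t); [|auto].
    unfold term. destruct Rle_dec as [_|h]; [lra|exfalso; apply h, Rle_refl].
  - intros t s hs hbelow. apply (proj2 (h_rm t)). intros r [n ->]. unfold term.
    destruct Rle_dec as [h|_]; [|exact hs].
    apply hbelow. pose proof (Rmax_l (tau n) (INR n)). lra.
Qed.

(* The net of finite stages: a finite list (plus the base point o) and an
   accuracy N, ordered by inclusion of lists and size of N. *)
Definition stage_below {X : Type} (i j : list X * nat) : Prop :=
  incl (fst i) (fst j) /\ (snd i <= snd j)%nat.

Definition stage_set {X : Type} (o : X) (i : list X * nat) (x : X) : Prop :=
  x = o \/ In x (fst i).

Lemma stage_set_finite {X : Type} (o : X) (i : list X * nat) : finite_set (stage_set o i).
Proof. exists (o :: fst i). intros x [h|h]; [left|right]; auto. Qed.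

Lemma stages_eventually_contain {X : Type} (o x y : X) (N : nat) :
  eventually stage_below (fun j => (N <= snd j)%nat /\ stage_set o j x /\ stage_set o j y).
Proof.
  exists (x :: y :: nil, N). intros j [hl hN].
  split; [exact hN|split; right; apply hl; simpl; auto].
Qed.

Lemma stage_net_limit {X : Type} (o : X) (p : R) (F : (X -> Prop) -> (X -> X -> R) -> Prop)
  (s : list X * nat -> X -> X -> R) (b : X -> X -> R) :
  sheaf_of_metrics F -> p_admissible p F ->
  (forall i, F (stage_set o i) (s i)) ->
  (forall i x y, stage_set o i x -> stage_set o i y -> s i x y <= b x y) ->
  exists v, F (fun _ => True) v /\ forall x y c,
    (eventually stage_below (fun i => c <= s i x y) -> c <= v x y) /\
    (eventually stage_below (fun i => s i x y <= c) -> v x y <= c).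
Proof.
  intros F_sheaf F_adm s_in_F s_bounded.
  destruct (bounded_net_limit p F F_sheaf F_adm (@stage_below X) (nil, 0%nat))
    with (Om := fun _ : X => True) (U := stage_set o) (s := s) (b := b) as [v [F_v hv]];
    auto.
  - intro i. split; [apply incl_refl|lia].
  - intros i j k [h1 h2] [h3 h4]. split; [eapply incl_tran; eauto|lia].
  - intros i j. exists (fst i ++ fst j, Nat.max (snd i) (snd j)).
    split; split; simpl; try lia; intros x hx; apply in_or_app; auto.
  - apply stage_set_finite.
  - intros i x _. exact I.
  - intros i j [hl _] x [h|h]; [left|right; apply hl]; auto.
  - intros x _. exists (x :: nil, 0%nat). right. left. reflexivity.
  - exists v. split; [exact F_v|]. intros x y c. exact (hv x y c I I).
Qed.

Theorem mainTheorem7 (X : Type) (d : X -> X -> R) (o : X) (p : R)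
  (F : (X -> Prop) -> (X -> X -> R) -> Prop) (rho_plus T : R -> R) :
  is_metric d ->
  0 < p ->
  sheaf_of_metrics F ->
  p_admissible p F ->
  incr_unbounded rho_plus ->
  (forall K, 0 <= K -> 0 <= T K) ->
  (forall U : X -> Prop, finite_set U -> U o ->
     forall K, 0 < K ->
       exists s, F U s /\
         (forall x y, U x -> U y -> s x y <= rho_plus (d x y)) /\
         (forall x y, U x -> U y -> T K <= d x y -> K <= s x y)) ->
  exists s, F (fun _ : X => True) s /\ coarse d s.
Proof.
  intros [d_nonneg _] hp F_sheaf F_adm rho_ok _ hyp.
  set (b := fun x y => rho_plus (d x y)).
  assert (b_nonneg : forall x y, 0 <= b x y) by (intros x y; apply rho_ok, d_nonneg).
  destruct (choice (fun i s => F (stage_set o i) s /\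
              (forall x y, stage_set o i x -> stage_set o i y -> s x y <= b x y) /\
              (forall n x y, (n <= snd i)%nat -> stage_set o i x -> stage_set o i y ->
                 T (level p n) <= d x y -> INR n <= s x y))) as [s h_s].
  { intro i. apply (finite_stage_metric d p F T); auto.
    apply hyp; [apply stage_set_finite|left; reflexivity]. }
  destruct (stage_net_limit o p F s b F_sheaf F_adm (fun i => proj1 (h_s i))
              (fun i => proj1 (proj2 (h_s i)))) as [v [F_v v_bounds]].
  destruct (threshold_lower_control (fun n => T (level p n))) as [rm [rm_ok rm_below]].
  exists v. split; [exact F_v|].
  exists rm, rho_plus. split; [exact rm_ok|split; [exact rho_ok|]].
  intros x y. split.
  - apply rm_below; [exact (proj1 (proj1 (proj2 F_sheaf) _ _ F_v) x y I I)|].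
    intros n hn. apply (proj1 (v_bounds x y (INR n))).
    destruct (stages_eventually_contain o x y n) as [i hi]. exists i.
    intros j hij. destruct (hi j hij) as [hn_j [hx hy]]. apply (proj2 (proj2 (h_s j))); auto.
  - apply (proj2 (v_bounds x y (b x y))).
    destruct (stages_eventually_contain o x y 0) as [i hi]. exists i.
    intros j hij. destruct (hi j hij) as [_ [hx hy]]. apply (proj1 (proj2 (h_s j))); auto.
Qed.
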